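(* Let $q$ be a prime power, $m>1$ an integer, and $j$ an integer with $1\le j\le m-1$ and $\gcd(j,q-1)=1$. Let $\lambda_j(x)=\sum_{0\le i_1<i_2<\cdots<i_j\le m-1}x^{q^{i_1}+\cdots+q^{i_j}}$, the $j$-th elementary symmetric polynomial evaluated at $x,x^q,\ldots,x^{q^{m-1}}$. Then the map $\lambda_j:\mathbf{F}_{q^m}\to\mathbf{F}_q$, $\alpha\mapsto\lambda_j(\alpha)$, is surjective.
   Context: For $\alpha\in\mathbf{F}_{q^m}$ one has $\lambda_j(\alpha)\in\mathbf{F}_q$, so $\lambda_j$ indeed defines a map $\mathbf{F}_{q^m}\to\mathbf{F}_q$. *)

From mathcomp Require Import all_boot all_algebra all_field.
Set Implicit Arguments. Unset Strict Implicit. Unset Printing Implicit Defensive.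
Import GRing.Theory.
Local Open Scope ring_scope.

Definition lambda (L : finFieldType) (q m j : nat) (x : L) : L :=
  \sum_(S : {set 'I_m} | #|S| == j) x ^+ (\sum_(i in S) q ^ (nat_of_ord i))%N.

Definition prime_power (q : nat) : Prop :=
  exists p k : nat, [/\ prime p, (0 < k)%N & q = (p ^ k)%N].

From mathcomp Require Import all_boot all_algebra all_field.
Set Implicit Arguments. Unset Strict Implicit. Unset Printing Implicit Defensive.
Import GRing.Theory.

(* The exponents q^{i_1} + ... + q^{i_j} of lambda_j are distinct base-q
   expansions with 0/1 digits, all below q^m, so lambda_j is given by a nonzero
   polynomial of degree < q^m = #|F_{q^m}| and cannot vanish identically; pick y
   with mu := lambda_j(y) != 0. Frobenius permutes the j-subsets of exponents
   cyclically, so mu lies in F_q, and lambda_j(t y) = t^j mu for t in F_q. As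
   gcd(j, q-1) = 1, every c in F_q is some t^j mu, namely for t^j = c / mu. *)

Lemma sum_expn_lt (q n : nat) : 1 < q -> \sum_(i < n) q ^ i < q ^ n.
Proof.
move=> q_gt1; elim: n => [|n IHn]; first by rewrite big_ord0.
rewrite big_ord_recr /= expnS.
have : q ^ n + q ^ n <= q * q ^ n by rewrite addnn -mul2n leq_mul2r q_gt1 orbT.
by apply: leq_trans; rewrite ltn_add2r.
Qed.

Lemma bool_expansion_inj (q n : nat) (F G : 'I_n -> bool) : 1 < q ->
  \sum_(i < n) F i * q ^ i = \sum_(i < n) G i * q ^ i -> F =1 G.
Proof.
move=> q_gt1; elim: n F G => [|n IHn] F G; first by move=> _ [].
rewrite !big_ord_recl /= !expn0 !muln1.
have shift (H : 'I_n.+1 -> bool) : \sum_(i < n) H (lift ord0 i) * q ^ bump 0 i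
    = q * \sum_(i < n) H (lift ord0 i) * q ^ i.
  by rewrite big_distrr; apply: eq_bigr => i _; rewrite /bump add1n expnS mulnCA.
rewrite !shift => eqFG.
have digit_lt (b : bool) : b < q by case: b => //; apply: ltnW.
have eq0 : F ord0 = G ord0.
  have := congr1 (modn^~ q) eqFG.
  rewrite ![_ + q * _]addnC ![q * _]mulnC !modnMDl !modn_small //.
  by case: (F ord0); case: (G ord0).
move: eqFG; rewrite eq0 => /addnI /eqP; rewrite eqn_mul2l gtn_eqF ?(ltnW q_gt1) //=.
move=> /eqP /IHn eq_lift i; case: (unliftP ord0 i) => [k ->|->] //; exact: eq_lift.
Qed.

Definition qweight (q m : nat) (S : {set 'I_m}) : nat :=
  \sum_(i in S) q ^ (nat_of_ord i).

Lemma qweight_expansion (q m : nat) (S : {set 'I_m}) :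
  qweight q S = \sum_(i < m) (i \in S) * q ^ i.
Proof.
rewrite /qweight big_mkcond; apply: eq_bigr => i _.
by case: (i \in S); rewrite ?mul1n ?mul0n.
Qed.

Lemma qweight_inj (q m : nat) : 1 < q -> injective (@qweight q m).
Proof.
move=> q_gt1 S T; rewrite !qweight_expansion => /(bool_expansion_inj q_gt1) eqST.
by apply/setP => i; exact: eqST.
Qed.

Lemma qweight_lt (q m : nat) (S : {set 'I_m}) : 1 < q -> qweight q S < q ^ m.
Proof.
move=> q_gt1; apply: leq_ltn_trans (sum_expn_lt m q_gt1).
by rewrite /qweight big_mkcond; apply: leq_sum => i _; case: (i \in S).
Qed.

Local Open Scope ring_scope.

Section LambdaPoly.

Variables (L : finFieldType) (q m j : nat).

Definition lambda_poly : {poly L} :=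
  \sum_(S : {set 'I_m} | #|S| == j) 'X^(qweight q S).

Lemma horner_lambda_poly (x : L) : lambda_poly.[x] = lambda q m j x.
Proof. by rewrite horner_sum; apply: eq_bigr => S _; rewrite hornerXn. Qed.

Lemma size_lambda_poly : (1 < q)%N -> (size lambda_poly <= q ^ m)%N.
Proof.
move=> q_gt1; apply: leq_trans (size_sum _ _ _) _; apply/bigmax_leqP => S _.
by rewrite size_polyXn; apply: qweight_lt.
Qed.

Lemma lambda_poly_neq0 : (1 < q)%N -> (j <= m)%N -> lambda_poly != 0.
Proof.
move=> q_gt1 le_jm.
pose S0 : {set 'I_m} := [set widen_ord le_jm i | i : 'I_j].
have card_S0 : #|S0| = j.
  by rewrite card_imset ?card_ord // => a b /(congr1 val) /= /val_inj.
apply/eqP => /(congr1 (fun p : {poly L} => p`_(qweight q S0))).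
rewrite coef0 coef_sum (bigD1 S0) ?card_S0 //= coefXn eqxx big1.
  by rewrite addr0 => /eqP; rewrite oner_eq0.
move=> S /andP[_ neq_S]; rewrite coefXn.
by case: eqP => // /(qweight_inj q_gt1) eq_S; rewrite eq_S eqxx in neq_S.
Qed.

End LambdaPoly.

Lemma lambda_neq0 (L : finFieldType) (q m j : nat) :
  (1 < q)%N -> #|L| = (q ^ m)%N -> (j <= m)%N -> exists y : L, lambda q m j y != 0.
Proof.
move=> q_gt1 card_L le_jm.
have [y nz_y | all0] := pickP (fun y : L => lambda q m j y != 0); first by exists y.
have roots : all (root (lambda_poly L q m j)) (enum L).
  by apply/allP => y _; rewrite /root horner_lambda_poly; apply/negbFE/all0.
have := max_poly_roots (lambda_poly_neq0 L q_gt1 le_jm) roots (enum_uniq L).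
by rewrite -cardE card_L ltnNge size_lambda_poly.
Qed.

Lemma lambda_prod (L : finFieldType) (q m j : nat) (x : L) :
  lambda q m j x = \sum_(S : {set 'I_m} | #|S| == j) \prod_(i in S) x ^+ (q ^ i).
Proof.
apply: eq_bigr => S _.
exact: (big_morph (fun n => x ^+ n) (exprD x) (expr0 x)).
Qed.

(* x^(q^i) raised to q is x^(q^(i+1)), with the wrap-around x^(q^m) = x; hence
   Frobenius acts on the products by rotating each index set S with ordS. *)
Lemma lambda_frobenius (L : finFieldType) (q m j : nat) :
  [pchar L].-nat q -> #|L| = (q ^ m)%N ->
  forall x : L, lambda q m j x ^+ q = lambda q m j x.
Proof.
move=> q_char card_L x; rewrite !lambda_prod.
have q_gt0 : (0 < q)%N by case/andP: q_char.
rewrite (big_morph (fun z : L => z ^+ q) (fun a b => exprDn_pchar a b q_char)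
  (expr0n _ q)) gtn_eqF //.
have rotate (i : 'I_m) : (x ^+ (q ^ i)) ^+ q = x ^+ (q ^ ordS i).
  rewrite -exprM -expnSr /=; case: (ltnP i.+1 m) => [lt_im | le_mi].
    by rewrite modn_small.
  have -> : i.+1 = m by apply/eqP; rewrite eqn_leq le_mi ltn_ord.
  by rewrite modnn expn0 -card_L expf_card.
transitivity (\sum_(S : {set 'I_m} | #|S| == j)
                \prod_(i in @ordS m @: S) x ^+ (q ^ i)).
  apply: eq_bigr => S _; rewrite (big_morph (fun z : L => z ^+ q) (exprMn q)
    (expr1n _ q)) big_imset /=; last by move=> a b _ _; apply: ordS_inj.
  by apply: eq_bigr => i _; exact: rotate.
rewrite [RHS](reindex_inj (imset_inj (@ordS_inj m))) /=.
by apply: eq_bigl => S; rewrite card_imset //; apply: ordS_inj.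
Qed.

Lemma lambda_scale (L : finFieldType) (q m j : nat) (t y : L) :
  t ^+ q = t -> lambda q m j (t * y) = t ^+ j * lambda q m j y.
Proof.
move=> tq; rewrite !lambda_prod big_distrr /=; apply: eq_bigr => S /eqP card_S.
have t_fixed (i : nat) : t ^+ (q ^ i) = t.
  by elim: i => [|i IHi]; rewrite ?expn0 ?expr1 // expnSr exprM IHi tq.
rewrite -card_S -prodr_const -big_split; apply: eq_bigr => i _.
by rewrite exprMn t_fixed.
Qed.

(* With (q-1) | 1 + a j (Bezout), x^(a j) is x^-1 on the roots of x^(q-1) = 1,
   so (x^a)^-1 is a j-th root of x. *)
Lemma fixed_expr_root (F : fieldType) (q j : nat) (x : F) :
  (1 < q)%N -> (0 < j)%N -> coprime j (q - 1) -> x ^+ q = x ->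
  exists2 t : F, t ^+ q = t & t ^+ j = x.
Proof.
move=> q_gt1 j_gt0 co_jq xq.
have [-> | nz_x] := eqVneq x 0.
  by exists 0; rewrite expr0n ?gtn_eqF // ltnW.
have x_unity : x ^+ (q - 1) = 1.
  by apply: (mulIf nz_x); rewrite mul1r -exprSr subn1 prednK ?xq // ltnW.
have q1_gt0 : (0 < q - 1)%N by rewrite subn_gt0.
have [a _] := Bezoutl j q1_gt0.
rewrite gcdnC (eqP co_jq) => /dvdnP[K def_K].
have xaj : x ^+ (a * j) = x^-1.
  apply: (mulfI nz_x); rewrite divff // -exprS -add1n def_K mulnC exprM.
  by rewrite x_unity expr1n.
exists (x ^+ a)^-1; first by rewrite exprVn -exprM mulnC exprM xq.
by rewrite exprVn -exprM xaj invrK.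
Qed.

Theorem lemma3p2 (L : finFieldType) (q m j : nat) :
  prime_power q -> (1 < m)%N -> #|L| = (q ^ m)%N ->
  (1 <= j)%N -> (j <= m - 1)%N -> coprime j (q - 1) ->
  forall c : L, c ^+ q = c -> exists a : L, lambda q m j a = c.
Proof.
move=> [p [k [p_prime k_gt0 def_q]]] _ card_L j_gt0 le_jm co_jq c cq.
have q_gt1 : (1 < q)%N by rewrite def_q -(expn0 p) ltn_exp2l ?prime_gt1.
have q_char : [pchar L].-nat q.
  have p_char : p \in [pchar L].
    by apply: card_finPcharP p_prime; rewrite card_L def_q -expnM.
  by rewrite def_q pnatX (pnatE _ p_prime) p_char.
have [y nz_mu] := lambda_neq0 q_gt1 card_L (leq_trans le_jm (leq_subr 1 m)).
set mu := lambda q m j y in nz_mu.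
have mu_fixed : mu ^+ q = mu by apply: lambda_frobenius.
have [t tq tj] : exists2 t : L, t ^+ q = t & t ^+ j = c / mu.
  by apply: fixed_expr_root; rewrite // exprMn exprVn cq mu_fixed.
by exists (t * y); rewrite lambda_scale // tj divfK.
Qed.
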